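(* If $P$ and $Q$ are partition polynomials, then the composition $P\circ Q$ is also a partition polynomial.
   Context: A polynomial $P(X)$ with integer coefficients is called a partition polynomial if it can be written in the form \[P(X)=a_nX^n + a_{n-1}X^{n-1}(1-X) + \cdots + a_0(1-X)^n\] for some integer $n\ge 0$ and some integers $a_0,\dots,a_n$ with $0\le a_i\le \binom{n}{i}$ for all $i\le n$. *)

From mathcomp Require Import all_boot all_order all_algebra.
Set Implicit Arguments. Unset Strict Implicit. Unset Printing Implicit Defensive.
Import Order.TTheory GRing.Theory Num.Theory.
Local Open Scope ring_scope.

Definition partition_poly (P : {poly int}) : Prop :=
  exists (n : nat) (a : nat -> int),
    (forall i : nat, (i <= n)%N -> 0 <= a i /\ a i <= ('C(n, i))%:Z) /\
    P = \sum_(i < n.+1) (a i)%:P * 'X^i * (1 - 'X) ^+ (n - i).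

From mathcomp Require Import all_boot all_order all_algebra.
From mathcomp Require Import zify ring.
Set Implicit Arguments. Unset Strict Implicit. Unset Printing Implicit Defensive.
Import Order.TTheory GRing.Theory Num.Theory.
Local Open Scope ring_scope.

(* Let C_n be the cone of nonnegative combinations of the Bernstein basis
   X^i (1-X)^(n-i), i <= n.  Since this basis is linearly independent and
   \sum_i C(n,i) X^i (1-X)^(n-i) = 1, P is a partition polynomial exactly when
   both P and 1 - P lie in some C_n: their coordinates are nonnegative and add
   up to C(n,i).  The cones multiply, C_m C_n <= C_(m+n), so if Q and 1 - Q lie
   in C_m then P \Po Q = \sum_i a_i Q^i (1-Q)^(n-i) lies in C_(mn) for every P
   in C_n; applied to P and to 1 - P this gives the theorem. *)

Section BernsteinSum.
Variable R : idomainType.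

Definition bernstein_sum (n : nat) (a : nat -> R) : {poly R} :=
  \sum_(i < n.+1) (a i)%:P * 'X^i * (1 - 'X) ^+ (n - i).

Lemma bernstein_sumD n a b :
  bernstein_sum n a + bernstein_sum n b = bernstein_sum n (fun i => a i + b i).
Proof.
by rewrite -big_split; apply: eq_bigr => i _; rewrite polyCD !mulrDl.
Qed.

Lemma bernstein_sumB n a b :
  bernstein_sum n a - bernstein_sum n b = bernstein_sum n (fun i => a i - b i).
Proof.
by rewrite -sumrB; apply: eq_bigr => i _; rewrite polyCB !mulrBl.
Qed.

Lemma bernstein_sum_binomial n : bernstein_sum n (fun i => 'C(n, i)%:R) = 1.
Proof.
have := exprDn (1 - 'X : {poly R}) 'X n; rewrite subrK expr1n => ->.
by apply: eq_bigr => i _; rewrite polyC_natr -mulr_natl; ring.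
Qed.

(* Evaluating at 0 kills every term but the first, which leaves a multiple of X. *)
Lemma bernstein_sum_eq0 n c :
  bernstein_sum n c = 0 -> forall i, (i <= n)%N -> c i = 0.
Proof.
elim: n c => [|n IHn] c.
  rewrite /bernstein_sum big_ord1 expr0 !mulr1 => /polyC_inj c0 i.
  by rewrite leqn0 => /eqP ->.
have tail_eq : \sum_(i < n.+1) (c (bump 0 i))%:P * 'X^(bump 0 i)
                   * (1 - 'X) ^+ (n.+1 - bump 0 i)
               = 'X * bernstein_sum n (fun i => c i.+1).
  rewrite mulr_sumr; apply: eq_bigr => i _.
  by rewrite /bump /= add1n subSS exprS !mulrA (mulrC 'X).
rewrite /bernstein_sum big_ord_recl subn0 expr0 mulr1 tail_eq => sum0.
have c0 : c 0%N = 0.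
  by have := congr1 (horner^~ 0) sum0; rewrite !hornerE subr0 expr1n mulr1.
move: sum0; rewrite c0 polyC0 mul0r add0r => /eqP.
by rewrite mulf_eq0 polyX_eq0 => /eqP /IHn tail0 [|i] // /tail0.
Qed.

Lemma bernstein_sum_comp n a Q :
  bernstein_sum n a \Po Q =
  \sum_(i < n.+1) (a i)%:P * Q ^+ i * (1 - Q) ^+ (n - i).
Proof.
rewrite /bernstein_sum raddf_sum; apply: eq_bigr => i _ /=.
by rewrite !comp_polyM comp_polyC !rmorphXn /= comp_polyB comp_polyX comp_polyC.
Qed.

End BernsteinSum.

Section BernsteinCone.
Variable R : numDomainType.

Definition bernstein_cone (n : nat) (P : {poly R}) : Prop :=
  exists2 a : nat -> R, (forall i, (i <= n)%N -> 0 <= a i) & P = bernstein_sum n a.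

Lemma bernstein_cone0 n : bernstein_cone n 0.
Proof.
exists (fun _ => 0) => //; rewrite /bernstein_sum big1 // => i _.
by rewrite polyC0 !mul0r.
Qed.

Lemma bernstein_coneD n P Q :
  bernstein_cone n P -> bernstein_cone n Q -> bernstein_cone n (P + Q).
Proof.
move=> [a a_ge0 ->] [b b_ge0 ->]; exists (fun i => a i + b i).
  by move=> i le_in; rewrite addr_ge0 ?a_ge0 ?b_ge0.
by rewrite bernstein_sumD.
Qed.

Lemma bernstein_cone_sum n (I : finType) (F : I -> {poly R}) :
  (forall i, bernstein_cone n (F i)) -> bernstein_cone n (\sum_i F i).
Proof.
move=> coneF; apply: big_ind => //.
  exact: bernstein_cone0.
exact: bernstein_coneD.
Qed.

Lemma bernstein_cone_term n k c : (k <= n)%N -> 0 <= c ->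
  bernstein_cone n (c%:P * 'X^k * (1 - 'X) ^+ (n - k)).
Proof.
move=> le_kn c_ge0; exists (fun i => if i == k then c else 0).
  by move=> i _; case: ifP.
rewrite /bernstein_sum (bigD1 (Ordinal (le_kn : (k < n.+1)%N))) //= eqxx.
rewrite big1 ?addr0 // => i /eqP neq_ik; case: eqP => [eq_ik|_].
  by case: neq_ik; apply: val_inj.
by rewrite polyC0 !mul0r.
Qed.

Lemma bernstein_coneZ n c P :
  0 <= c -> bernstein_cone n P -> bernstein_cone n (c%:P * P).
Proof.
move=> c_ge0 [a a_ge0 ->]; exists (fun i => c * a i).
  by move=> i le_in; rewrite mulr_ge0 ?a_ge0.
by rewrite mulr_sumr; apply: eq_bigr => i _; rewrite polyCM !mulrA.
Qed.

Lemma bernstein_coneM m n P Q :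
  bernstein_cone m P -> bernstein_cone n Q -> bernstein_cone (m + n) (P * Q).
Proof.
move=> [a a_ge0 ->] [b b_ge0 ->].
rewrite mulr_suml; apply: bernstein_cone_sum => j.
rewrite mulr_sumr; apply: bernstein_cone_sum => i.
have le_jm : (j <= m)%N by rewrite -ltnS.
have le_in : (i <= n)%N by rewrite -ltnS.
have -> : (a j)%:P * 'X^j * (1 - 'X) ^+ (m - j) * ((b i)%:P * 'X^i * (1 - 'X) ^+ (n - i))
        = (a j * b i)%:P * 'X^(j + i) * (1 - 'X) ^+ (m + n - (j + i)).
  have -> : (m + n - (j + i) = (m - j) + (n - i))%N by lia.
  by rewrite polyCM !exprD; ring.
by apply: bernstein_cone_term; [lia | rewrite mulr_ge0 ?a_ge0 ?b_ge0].
Qed.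

Lemma bernstein_cone1 : bernstein_cone 0 1.
Proof. by have := @bernstein_cone_term 0 0 1 (leqnn 0) ler01; rewrite !mulr1. Qed.

Lemma bernstein_coneX m P k :
  bernstein_cone m P -> bernstein_cone (m * k) (P ^+ k).
Proof.
move=> coneP; elim: k => [|k IHk]; first by rewrite muln0 expr0; apply: bernstein_cone1.
by rewrite exprS mulnS; apply: bernstein_coneM.
Qed.

Lemma bernstein_cone_comp m n P Q :
  bernstein_cone n P -> bernstein_cone m Q -> bernstein_cone m (1 - Q) ->
  bernstein_cone (m * n) (P \Po Q).
Proof.
move=> [a a_ge0 ->] coneQ coneQ'; rewrite bernstein_sum_comp.
apply: bernstein_cone_sum => i; have le_in : (i <= n)%N by rewrite -ltnS.
rewrite -mulrA; apply: bernstein_coneZ; first exact: a_ge0.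
have -> : (m * n = m * i + m * (n - i))%N by rewrite -mulnDr subnKC.
by apply: bernstein_coneM; apply: bernstein_coneX.
Qed.

End BernsteinCone.

Lemma partition_polyP (P : {poly int}) :
  partition_poly P <-> exists n, bernstein_cone n P /\ bernstein_cone n (1 - P).
Proof.
have binomial_one n : bernstein_sum n (fun i => 'C(n, i)%:Z) = 1.
  by rewrite -(bernstein_sum_binomial _ n); apply: eq_bigr => i _; rewrite natz.
split.
  move=> [n [a [a_bnd ->]]]; exists n; split.
    by exists a => // i /a_bnd [].
  exists (fun i => 'C(n, i)%:Z - a i); first by move=> i /a_bnd []; rewrite subr_ge0.
  by rewrite -bernstein_sumB binomial_one.
move=> [n [[a a_ge0 defP] [b b_ge0 defP']]].
have sum_ab : bernstein_sum n (fun i => a i + b i - 'C(n, i)%:Z) = 0.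
  by rewrite -bernstein_sumB -bernstein_sumD -defP -defP' binomial_one; ring.
exists n, a; split=> // i le_in; split; first exact: a_ge0.
move/eqP: (bernstein_sum_eq0 sum_ab le_in); rewrite subr_eq0 => /eqP <-.
by rewrite lerDl b_ge0.
Qed.

Theorem mainTheorem3 (P Q : {poly int}) :
  partition_poly P -> partition_poly Q -> partition_poly (P \Po Q).
Proof.
move=> /partition_polyP [n [coneP coneP']] /partition_polyP [m [coneQ coneQ']].
apply/partition_polyP; exists (m * n)%N; split.
  exact: bernstein_cone_comp.
have -> : 1 - (P \Po Q) = (1 - P) \Po Q by rewrite comp_polyB -polyC1 comp_polyC.
exact: bernstein_cone_comp.
Qed.
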